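(* In the induced continuum market $\widehat\Gamma$, let $M$ be a stable pseudo-matching, choose $f'\in F$, and let $M'$ be a pseudo-matching such that $M'_{f'}(w)=0$ whenever $M_{f'}(w)=0$ ($w\in W$), and $M'_f=M_f$ for all $f\ne f'$. Then in $M'$ there is no blocking coalition involving any firm $f\in F$ with $f\neq f'$; that is, there are no $f\in F\setminus\{f'\}$ and $M''\in[0,1]^W$ with $M''\succ_f M'_f$ and $M''\le A^{\preceq f}(M')$.
   Context: Finite firms $F$, finite workers $W=\{w_1,\dots,w_n\}$, null firm $\o$, $\widetilde F=F\cup\{\o\}$; each worker $w$ has a strict complete transitive preference $\succ_w$ over $\widetilde F$ ($f\succeq_w f'$ means $f\succ_w f'$ or $f=f'$); each firm $f\in F$ has a strict complete transitive preference $\succ_f$ over $2^W$, subsets identified with indicator vectors. For $f\in F$ list the sets $S\succ_f\emptyset$ as $\mathbf u^1\succ_f\cdots\succ_f\mathbf u^L$. For $\mathbf x\in[0,1]^W$: $t_0=0$, $\mathbf z^0=\mathbf x$, $t_k=\min\{1-\sum_{j<k}t_j,\ z^{k-1}_i: u^k_i\ne 0\}$, $\mathbf z^k=\mathbf z^{k-1}-t_k\mathbf u^k$, $\widehat{Ch}_f(\mathbf x)=\sum_{k=1}^L t_k\mathbf u^k$; $\widehat{Ch}_{\o}(\mathbf x)=\mathbf x$. A pseudo-matching is $M=(M_f)_{f\in\widetilde F}$ with $M_f\in[0,1]^W$. $\vee$ is componentwise max, $\le$ componentwise. $M''\succ_f M_f$ means $M''=\widehat{Ch}_f(M''\vee M_f)$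 and $M''\ne M_f$. $A^{\preceq f}(M)(w)=\sum_{f''\in\widetilde F:f\succeq_w f''}M_{f''}(w)$. A pseudo-matching $M$ is stable if (i) $M_f=\widehat{Ch}_f(M_f)$ for each $f\in F$ and $M_f(w)=0$ whenever $\o\succ_w f$; (ii) there are no $f\in F$, $M''\in[0,1]^W$ with $M''\succ_f M_f$ and $M''\le A^{\preceq f}(M)$. *)

From mathcomp Require Import all_boot all_order all_algebra.
From mathcomp Require Import reals.
Set Implicit Arguments. Unset Strict Implicit. Unset Printing Implicit Defensive.
Import Order.TTheory GRing.Theory Num.Theory.
Local Open Scope ring_scope.

(* Strict complete transitive preference (strict total order) as a relation
   [r x y] meaning "x is strictly preferred to y". *)
Definition strict_total_order (T : eqType) (r : rel T) : Prop :=
  irreflexive r /\ transitive r /\ (forall x y, x != y -> r x y || r y x).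

(* A market: firms F, workers W; the null firm is [None : option F], so the
   extended set of firms F~ is [option F].
   [prefW w f g] : f >_w g  (over option F)
   [prefF f S T] : S >_f T  (over 2^W = {set W}). *)
Record market (F W : finType) := Market {
  prefW : W -> rel (option F);
  prefF : F -> rel {set W};
  prefW_sto : forall w, strict_total_order (prefW w);
  prefF_sto : forall f, strict_total_order (prefF f)
}.

Section Continuum.
Variables (F W : finType) (R : realType) (Gm : market F W).

Local Notation vec := {ffun W -> R}.

Definition ind (S : {set W}) : vec := [ffun w => (w \in S)%:R].

(* u^1 >_f ... >_f u^L : the sets strictly preferred to the empty set,
   listed from best to worst. *)
Definition acceptable_list (f : F) : seq {set W} :=
  [seq S <- sort (prefF Gm f) (enum {set W}) | prefF Gm f S set0].

(* The greedy procedure: [s] is the remaining budget 1 - sum_{j<k} t_j,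
   [z] is z^{k-1}; t_k = min(s, min_{i : u^k_i <> 0} z_i). *)
Fixpoint ch_aux (l : seq {set W}) (z : vec) (s : R) : vec :=
  match l with
  | [::] => [ffun => 0]
  | u :: l' =>
      let t := \big[Num.min/s]_(i in u) z i in
      [ffun w => t * ind u w + ch_aux l' [ffun w' => z w' - t * ind u w'] (s - t) w]
  end.

Definition ChHat (f : option F) (x : vec) : vec :=
  match f with
  | Some f0 => ch_aux (acceptable_list f0) x 1
  | None => x
  end.

Definition pmatching := option F -> vec.

Definition in01 (x : vec) : Prop := forall w, 0 <= x w <= 1.

Definition is_pmatching (M : pmatching) : Prop := forall f, in01 (M f).

Definition vjoin (x y : vec) : vec := [ffun w => Num.max (x w) (y w)].

Definition vle (x y : vec) : Prop := forall w, x w <= y w.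

Definition firm_prefers (f : F) (M'' Mf : vec) : Prop :=
  M'' = ChHat (Some f) (vjoin M'' Mf) /\ M'' <> Mf.

Definition weakpref (w : W) (f g : option F) : bool := prefW Gm w f g || (f == g).

Definition Abelow (f : F) (M : pmatching) : vec :=
  [ffun w => \sum_(g : option F | weakpref w (Some f) g) M g w].

Definition blocks (M : pmatching) (f : F) (M'' : vec) : Prop :=
  in01 M'' /\ firm_prefers f M'' (M (Some f)) /\ vle M'' (Abelow f M).

Definition stable (M : pmatching) : Prop :=
  (forall f : F, M (Some f) = ChHat (Some f) (M (Some f)) /\
     (forall w, prefW Gm w None (Some f) -> M (Some f) w = 0)) /\
  (forall (f : F) (M'' : vec), ~ blocks M f M'').

End Continuum.

From mathcomp Require Import all_boot all_order all_algebra.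
From mathcomp Require Import reals.
From mathcomp Require Import ring lra.
Set Implicit Arguments. Unset Strict Implicit. Unset Printing Implicit Defensive.
Import Order.TTheory GRing.Theory Num.Theory.
Local Open Scope ring_scope.

(** The greedy choice [ch_aux l x s] is the step sum of the lexicographically
    largest sequence of step lengths that is feasible for the supply [x] and
    the budget [s].  Hence withdrawing supply that the choice rejects does not
    change it; and if [m] is chosen from [x] while [x] still dominates a proper
    convex combination of [m] and some [z >= m], then [m] is also chosen from
    [z], since otherwise mixing the two step sequences would beat the greedy
    one for [x].

    Now let [M''] block [M'] at [f <> f'], so that [M'_f = M_f =: m].  Wherever
    [A^{<=f}(M')] differs from [A^{<=f}(M)], the firm [f'] is weakly below [f]
    and [M_{f'}] is positive, so [A^{<=f}(M)] exceeds [m] strictly there.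
    Truncating [M''] at [A^{<=f}(M)] without going below [m] and applying
    [Ch_f] gives an offer that blocks [M] at [f]; it differs from [m] by the
    second property above, with a mixing weight below all the gaps
    [A^{<=f}(M) - m] that the truncation uses. *)

Section GreedyChoice.
Variables (W : finType) (R : realType).
Local Notation vec := {ffun W -> R}.
Implicit Types (l : seq {set W}) (ts : seq R) (x z : vec) (s : R).
Local Notation "a <=lex b" := (@Order.le _ (seqlexi R) a b) (at level 70).
Local Notation "a <lex b" := (@Order.lt _ (seqlexi R) a b) (at level 70).

Fixpoint greedy_steps l z s : seq R :=
  if l is u :: l' then
    let t := \big[Num.min/s]_(i in u) z i in
    t :: greedy_steps l' [ffun w => z w - t * ind R u w] (s - t)
  else [::].

Fixpoint step_sum l ts : vec :=
  match l, ts with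
  | u :: l', t :: ts' => [ffun w => t * ind R u w + step_sum l' ts' w]
  | _, _ => [ffun => 0]
  end.

Fixpoint feasible l ts z s : Prop :=
  match l, ts with
  | [::], [::] => 0 <= s /\ (forall w, 0 <= z w)
  | u :: l', t :: ts' =>
      0 <= t /\ feasible l' ts' [ffun w => z w - t * ind R u w] (s - t)
  | _, _ => False
  end.

Definition mix_steps (lam : R) ts ts' : seq R :=
  [seq (1 - lam) * p.1 + lam * p.2 | p <- zip ts ts'].

Lemma ch_auxE l z s : ch_aux l z s = step_sum l (greedy_steps l z s).
Proof. by elim: l z s => [|u l IH] z s //=; rewrite IH. Qed.

Lemma size_greedy_steps l z s : size (greedy_steps l z s) = size l.
Proof. by elim: l z s => [|u l IH] z s //=; rewrite IH. Qed.

Lemma feasible_ge0 l ts z s : feasible l ts z s -> 0 <= s /\ forall w, 0 <= z w.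
Proof.
elim: l ts z s => [|u l IH] [|t ts] z s //= [t_ge0 /IH [s_ge0 z_ge0]].
split; first lra.
by move=> w; have := z_ge0 w; rewrite !ffunE; case: (w \in u) => /=; lra.
Qed.

Lemma feasible_le l ts z s z' s' : feasible l ts z s ->
  s <= s' -> (forall w, z w <= z' w) -> feasible l ts z' s'.
Proof.
elim: l ts z s z' s' => [|u l IH] [|t ts] z s z' s' //=.
  move=> [s_ge0 z_ge0] ss' zz'; split; first lra.
  by move=> w; have := z_ge0 w; have := zz' w; lra.
move=> [t_ge0 feas] ss' zz'; split=> //; apply: (IH _ _ _ _ _ feas); first lra.
by move=> w; rewrite !ffunE; have := zz' w; lra.
Qed.

Lemma step_sum_bounds l ts z s : feasible l ts z s -> forall w,
  [/\ 0 <= step_sum l ts w, step_sum l ts w <= z w & step_sum l ts w <= s].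
Proof.
elim: l ts z s => [|u l IH] [|t ts] z s //=.
  by move=> [s_ge0 z_ge0] w; rewrite ffunE z_ge0.
move=> [t_ge0 /IH feas] w; have [] := feas w; rewrite !ffunE.
by case: (w \in u) => /=; split; lra.
Qed.

Lemma feasible_step_sum l ts z s :
  feasible l ts z s -> feasible l ts (step_sum l ts) s.
Proof.
elim: l ts z s => [|u l IH] [|t ts] z s //=.
  by move=> [s_ge0 _]; split=> // w; rewrite ffunE.
move=> [t_ge0 /IH feas]; split=> //; apply: (feasible_le feas); first lra.
by move=> w; rewrite !ffunE; lra.
Qed.

Lemma greedy_steps_feasible l z s :
  0 <= s -> (forall w, 0 <= z w) -> feasible l (greedy_steps l z s) z s.
Proof.
elim: l z s => [|u l IH] z s //= s_ge0 z_ge0.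
set t := \big[_/_]_(i in u) _.
have t_ge0 : 0 <= t by apply: le_bigmin.
have t_le_s : t <= s by apply: bigmin_le_id.
have t_le_z i : i \in u -> t <= z i by apply: bigmin_le_cond.
split=> //; apply: IH => [|w]; first lra.
rewrite !ffunE; case: (boolP (w \in u)) => [/t_le_z|_] /=.
  lra.
by have := z_ge0 w; lra.
Qed.

Lemma feasible_lex_greedy l ts z s :
  feasible l ts z s -> ts <=lex greedy_steps l z s.
Proof.
elim: l ts z s => [|u l IH] [|a ts] z s //= [a_ge0 feas].
have [s_ge0 z_ge0] := feasible_ge0 feas.
set t := \big[_/_]_(i in u) _.
have a_le_t : a <= t.
  apply: le_bigmin => [|i iu]; first lra.
  by have := z_ge0 i; rewrite !ffunE iu /=; lra.
rewrite lexi_cons a_le_t /=; apply/implyP => t_le_a.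
have -> : t = a by apply/le_anti; rewrite t_le_a a_le_t.
exact: IH feas.
Qed.

Lemma feasible_mix l (lam : R) ts ts' z z' s s' : 0 <= lam <= 1 ->
  feasible l ts z s -> feasible l ts' z' s' ->
  feasible l (mix_steps lam ts ts')
    [ffun w => (1 - lam) * z w + lam * z' w] ((1 - lam) * s + lam * s').
Proof.
move=> lam01.
elim: l ts ts' z z' s s' => [|u l IH] [|a ts] [|b ts'] z z' s s' //=.
  move=> [s_ge0 z_ge0] [s'_ge0 z'_ge0]; split; first nra.
  by move=> w; rewrite ffunE; have := z_ge0 w; have := z'_ge0 w; nra.
move=> [a_ge0 feas] [b_ge0 feas']; split; first nra.
apply: feasible_le (IH _ _ _ _ _ _ feas feas') _ _ => [|w]; first lra.
rewrite !ffunE; nra.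
Qed.

Lemma lex_lt_mix_steps (lam : R) ts ts' : 0 < lam ->
  size ts = size ts' -> ts <lex ts' -> ts <lex mix_steps lam ts ts'.
Proof.
move=> lam_gt0; elim: ts ts' => [|a ts IH] [|b ts'] //= [size_eq].
rewrite !ltxi_cons => /andP [a_le_b /implyP lt_tail].
have [a_lt_b|b_le_a] := ltP a b.
  have a_lt_mix : a < (1 - lam) * a + lam * b by nra.
  by rewrite (ltW a_lt_mix) leNgt a_lt_mix.
have -> : (1 - lam) * a + lam * b = a.
  have -> : b = a by apply/le_anti; rewrite a_le_b b_le_a.
  ring.
by rewrite lexx; apply: IH size_eq (lt_tail b_le_a).
Qed.

Lemma ch_aux_bounds l x s : 0 <= s -> (forall w, 0 <= x w) -> forall w,
  [/\ 0 <= ch_aux l x s w, ch_aux l x s w <= x w & ch_aux l x s w <= s].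
Proof.
move=> s_ge0 x_ge0; rewrite ch_auxE.
exact/step_sum_bounds/greedy_steps_feasible.
Qed.

Lemma ch_aux_between l x x' s : 0 <= s -> (forall w, 0 <= x w) ->
  (forall w, ch_aux l x s w <= x' w <= x w) -> ch_aux l x' s = ch_aux l x s.
Proof.
move=> s_ge0 x_ge0 between.
have x'_ge0 w : 0 <= x' w.
  have [ch_ge0 _ _] := ch_aux_bounds l s_ge0 x_ge0 w.
  by case/andP: (between w) => ch_le _; apply: le_trans ch_le.
have feas_x := greedy_steps_feasible l s_ge0 x_ge0.
have feas_x' := greedy_steps_feasible l s_ge0 x'_ge0.
rewrite !ch_auxE; congr step_sum; apply: (@le_anti _ (seqlexi R)).
apply/andP; split; apply: feasible_lex_greedy.
  by apply: feasible_le feas_x' _ _ => // w; case/andP: (between w).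
apply: feasible_le (feasible_step_sum feas_x) _ _ => // w.
by rewrite -ch_auxE; case/andP: (between w).
Qed.

Lemma ch_aux_of_mix_le l (m x z : vec) (lam s : R) :
  0 < lam <= 1 -> 0 <= s -> (forall w, 0 <= m w) -> (forall w, m w <= z w) ->
  (forall w, (1 - lam) * m w + lam * z w <= x w) ->
  ch_aux l x s = m -> ch_aux l z s = m.
Proof.
move=> /andP [lam_gt0 lam_le1] s_ge0 m_ge0 m_le_z mix_le_x.
have z_ge0 w : 0 <= z w by apply: le_trans (m_le_z w).
have x_ge0 w : 0 <= x w.
  by have := mix_le_x w; have := m_ge0 w; have := z_ge0 w; nra.
rewrite !ch_auxE => ch_x.
set gx := greedy_steps l x s; set gz := greedy_steps l z s.
have feas_x : feasible l gx x s by apply: greedy_steps_feasible.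
have feas_m : feasible l gx m s.
  by rewrite -ch_x; apply: feasible_step_sum feas_x.
have feas_z : feasible l gz z s by apply: greedy_steps_feasible.
have gx_le_gz : gx <=lex gz by apply/feasible_lex_greedy/(feasible_le feas_m).
have mix_le_gx : mix_steps lam gx gz <=lex gx.
  apply: feasible_lex_greedy.
  have lam01 : 0 <= lam <= 1 by rewrite ltW.
  apply: feasible_le (feasible_mix lam01 feas_m feas_z) _ _ => [|w]; first nra.
  by rewrite ffunE.
have [<- //|gx_ne_gz] := eqVneq gx gz.
have gx_lt_gz : gx <lex gz by rewrite lt_def eq_sym gx_ne_gz.
have size_g : size gx = size gz by rewrite !size_greedy_steps.
have := lt_le_trans (lex_lt_mix_steps lam_gt0 size_g gx_lt_gz) mix_le_gx.
by rewrite ltxx.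
Qed.

Lemma mix_le_truncation (m z a lam : R) : 0 <= m -> z <= 1 -> m <= a ->
  0 < lam <= 1 -> (a < z -> lam <= a - m) ->
  (1 - lam) * m + lam * Num.max z m <= Num.max m (Num.min z a).
Proof.
move=> m_ge0 z_le1 m_le_a /andP [lam_gt0 lam_le1] gap.
have [a_lt_z|z_le_a] := ltP a z.
  have lam_le := gap a_lt_z.
  by rewrite (max_idPl (ltW (le_lt_trans m_le_a a_lt_z))) (max_idPr m_le_a); nra.
rewrite [Num.max m z]maxC; have : m <= Num.max z m by rewrite le_max lexx orbT.
by nra.
Qed.

Lemma exists_uniform_gap (A m z : vec) : (forall w, A w < z w -> m w < A w) ->
  exists2 lam : R, 0 < lam <= 1 & forall w, A w < z w -> lam <= A w - m w.
Proof.
move=> gap; exists (\big[Num.min/1]_(w | A w < z w) (A w - m w)); last first.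
  by move=> w A_lt_z; apply: bigmin_le_cond.
rewrite bigmin_le_id andbT; elim/big_ind: _ => //.
  by move=> a b a_gt0 b_gt0; rewrite lt_min a_gt0 b_gt0.
by move=> w /gap; rewrite subr_gt0.
Qed.

Lemma ch_aux_truncate l (m z A : vec) :
  (forall w, 0 <= m w) -> in01 z -> z = ch_aux l (vjoin z m) 1 -> z <> m ->
  vle m A -> (forall w, A w < z w -> m w < A w) ->
  exists2 y, [/\ in01 y, y = ch_aux l (vjoin y m) 1 & y <> m] & vle y A.
Proof.
move=> m_ge0 z01 z_ch z_ne_m m_le_A gap.
set x : vec := [ffun w => Num.max (m w) (Num.min (z w) (A w))].
have m_le_x w : m w <= x w by rewrite ffunE le_max lexx.
have x_le_A w : x w <= A w by rewrite ffunE ge_max m_le_A ge_min lexx orbT.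
have x_ge0 w : 0 <= x w by apply: le_trans (m_le_x w).
have y_bounds := ch_aux_bounds l ler01 x_ge0.
exists (ch_aux l x 1); last first.
  by move=> w; have [_ y_le_x _] := y_bounds w; apply: le_trans (x_le_A w).
split.
- by move=> w; have [-> _ ->] := y_bounds w.
- apply/esym/ch_aux_between => // w; have [_ y_le_x _] := y_bounds w.
  by rewrite ffunE le_max lexx ge_max y_le_x m_le_x.
- move=> y_eq_m; have [lam lam01 lam_le] := exists_uniform_gap gap.
  apply: z_ne_m; rewrite z_ch.
  apply: (ch_aux_of_mix_le lam01 ler01 m_ge0 _ _ y_eq_m) => w; rewrite !ffunE.
    by rewrite le_max lexx orbT.
  have [_ z_le1] := andP (z01 w).
  by apply: mix_le_truncation => //; apply: lam_le.
Qed.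

End GreedyChoice.

Section Market.
Variables (F W : finType) (R : realType) (Gm : market F W).
Implicit Types M : pmatching F W R.

Lemma weakpref_refl w g : weakpref Gm w g g.
Proof. by rewrite /weakpref eqxx orbT. Qed.

Lemma Abelow_ge_self M f w : is_pmatching M -> M (Some f) w <= Abelow Gm f M w.
Proof.
move=> pmM; rewrite ffunE (bigD1 (Some f)) ?weakpref_refl //= lerDl.
by apply: sumr_ge0 => g _; case/andP: (pmM g w).
Qed.

Lemma Abelow_perturb M M' f' f w : is_pmatching M ->
  (forall w, M (Some f') w = 0 -> M' (Some f') w = 0) ->
  (forall g, g != Some f' -> M' g = M g) -> f != f' ->
  Abelow Gm f M' w = Abelow Gm f M w \/ M (Some f) w < Abelow Gm f M w.
Proof.
move=> pmM supp eq_off f_ne_f'.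
have M_ge0 g : 0 <= M g w by case/andP: (pmM g w).
have [f'_below|f'_not_below] :=
  boolP (weakpref Gm w (Some f) (Some f')); last first.
  left; rewrite !ffunE; apply: eq_bigr => g g_below; rewrite eq_off //.
  by apply: contraNneq f'_not_below => <-.
have [Mf'_eq0|Mf'_ne0] := eqVneq (M (Some f') w) 0.
  left; rewrite !ffunE; apply: eq_bigr => g _.
  have [->|g_ne_f'] := eqVneq g (Some f'); first by rewrite Mf'_eq0 supp.
  by rewrite eq_off.
right; have Mf'_gt0 : 0 < M (Some f') w by rewrite lt_def Mf'_ne0 M_ge0.
have f'_ne_f : Some f' != Some f by rewrite (inj_eq Some_inj) eq_sym.
rewrite ffunE (bigD1 (Some f)) ?weakpref_refl // (bigD1 (Some f')) ?f'_below //.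
by rewrite ltrDl; apply: ltr_wpDr Mf'_gt0; apply: sumr_ge0.
Qed.

End Market.

Theorem lemma5 (F W : finType) (R : realType) (Gm : market F W)
  (M : pmatching F W R) (f' : F) (M' : pmatching F W R) :
  is_pmatching M -> stable Gm M ->
  is_pmatching M' ->
  (forall w, M (Some f') w = 0 -> M' (Some f') w = 0) ->
  (forall f : option F, f != Some f' -> M' f = M f) ->
  forall f : F, f != f' -> forall M'' : {ffun W -> R}, ~ blocks Gm M' f M''.
Proof.
move=> pmM [_ M_unblocked] _ supp eq_off f f_ne_f' M''.
move=> [M''01 [[M''_ch M''_ne] M''_le]].
have M'f : M' (Some f) = M (Some f) by apply: eq_off; rewrite (inj_eq Some_inj).
rewrite M'f in M''_ch M''_ne.
have m_ge0 w : 0 <= M (Some f) w by case/andP: (pmM (Some f) w).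
have gap w : Abelow Gm f M w < M'' w -> M (Some f) w < Abelow Gm f M w.
  case: (Abelow_perturb Gm w pmM supp eq_off f_ne_f') => // <- A'_lt.
  by have := lt_le_trans A'_lt (M''_le w); rewrite ltxx.
have [y [y01 y_ch y_ne] y_le] := ch_aux_truncate m_ge0 M''01 M''_ch M''_ne
  (fun w => Abelow_ge_self Gm f w pmM) gap.
by apply: (M_unblocked f y).
Qed.
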